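(* Let $d\ge2$ and let $\rho_{DS}=\sum_{\mathbf k}p_{\mathbf k}|D_{\mathbf k}\rangle\langle D_{\mathbf k}|$ be a diagonal symmetric state on $(\mathbb{C}^d)^{\otimes 4}$. Let $M^{(4)}(\rho_{DS})$ be the $\frac{d^3+d}{2}\times\frac{d^3+d}{2}$ matrix $$M^{(4)}(\rho_{DS})=\bar M\;\oplus\;\bigoplus_{0\le i<j\le d-1} M_{ij},$$ where $\bar M$ is the $s\times s$ matrix, $s=d(d+1)/2$, indexed by the ordered list $r_1,\dots,r_s$ of pairs $(a,b)$ with $0\le a\le b\le d-1$, with entries $\bar M_{r_\alpha r_\beta}=\bar p_{r_\alpha r_\beta}$, and each $M_{ij}$ is the $d\times d$ matrix with entries $(M_{ij})_{ab}=\bar p_{ijab}$. Then $\rho_{DS}$ is PPT if and only if $M^{(4)}(\rho_{DS})\in\mathcal{DNN}_{\frac{d^3+d}{2}}$.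
   Context: For $N=4$ and local dimension $d$: $\mathbf k=(k_0,\dots,k_{d-1})$, $k_i\ge0$, $\sum k_i=4$, and $|D_{\mathbf k}\rangle=\binom{4}{\mathbf k}^{-1/2}\sum_{\pi}\pi\big(|0\rangle^{\otimes k_0}\otimes\cdots\otimes|d-1\rangle^{\otimes k_{d-1}}\big)$, summing over distinct permutations of the tensor factors, $\binom{4}{\mathbf k}=\frac{4!}{k_0!\cdots k_{d-1}!}$. A diagonal symmetric state has $p_{\mathbf k}\ge0$, $\sum p_{\mathbf k}=1$. For indices $a,b,c,e$, $p_{abce}$ is the coefficient of the Dicke state with index multiset $\{a,b,c,e\}$ and $\bar p_{abce}=p_{abce}/\binom{4}{\mathbf k}$; for pairs $r_\alpha=(a,b)$, $r_\beta=(c,e)$, $\bar p_{r_\alpha r_\beta}=\bar p_{abce}$. PPT means the partial transpose with respect to every bipartition of the four parties ($1:3$ and $2:2$) is positive semidefinite. $\mathcal{DNN}_n$ is the cone of $n\times n$ positive semidefinite matrices with non-negative entries. *)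

(* Scalars: an arbitrary numClosedFieldType C (e.g. complex
   numbers over a real closed field); states are operators on (C^d)^{(x)4},
   represented as functions on pairs of basis indices x : {ffun 'I_4 -> 'I_d}. *)
From mathcomp Require Import all_boot all_order all_algebra.
Set Implicit Arguments. Unset Strict Implicit. Unset Printing Implicit Defensive.
Import Order.TTheory GRing.Theory Num.Theory.
Local Open Scope ring_scope.

Section Defs.
Variable C : numClosedFieldType.

Definition psd (I : finType) (A : I -> I -> C) : Prop :=
  (forall i j, A j i = (A i j)^*) /\
  (forall v : I -> C, 0 <= \sum_i \sum_j (v i)^* * A i j * v j).

Definition dnn (I : finType) (A : I -> I -> C) : Prop :=
  psd A /\ (forall i j, 0 <= A i j).

Variable d : nat.

Definition basis4 := {ffun 'I_4 -> 'I_d}.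

Definition occ (x : basis4) : {ffun 'I_d -> 'I_5} :=
  [ffun i => inord #|[set j | x j == i]|].

Definition valid_k (k : {ffun 'I_d -> 'I_5}) : bool :=
  (\sum_i (k i : nat) == 4)%N.

Definition multinom (k : {ffun 'I_d -> 'I_5}) : nat :=
  (4`! %/ \prod_i (k i)`!)%N.

(* Dicke state |D_k>: normalized sum of the distinct permutations of
   |0>^{k_0} ... |d-1>^{k_{d-1}}, i.e. of the basis vectors with occupation k *)
Definition dicke (k : {ffun 'I_d -> 'I_5}) (x : basis4) : C :=
  if occ x == k then (sqrtC (multinom k)%:R)^-1 else 0.

Definition rhoDS (p : {ffun 'I_d -> 'I_5} -> C) (x y : basis4) : C :=
  \sum_(k | valid_k k) p k * dicke k x * (dicke k y)^*.

Definition diag_sym_weights (p : {ffun 'I_d -> 'I_5} -> C) : Prop :=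
  (forall k, valid_k k -> 0 <= p k) /\ \sum_(k | valid_k k) p k = 1.

Definition ptrans (S : {set 'I_4}) (A : basis4 -> basis4 -> C) (x y : basis4) : C :=
  A [ffun j => if j \in S then y j else x j] [ffun j => if j \in S then x j else y j].

(* PPT: partial transpose w.r.t. every bipartition (1:3 and 2:2) is PSD;
   a bipartition S : S^c is given by a nonempty proper subset S. *)
Definition PPT (A : basis4 -> basis4 -> C) : Prop :=
  forall S : {set 'I_4}, (0 < #|S| < 4)%N -> psd (ptrans S A).

Definition tup4 (a b c e : 'I_d) : basis4 :=
  [ffun j : 'I_4 => nth a [:: a; b; c; e] j].

Definition pbar (p : {ffun 'I_d -> 'I_5} -> C) (a b c e : 'I_d) : C :=
  p (occ (tup4 a b c e)) / (multinom (occ (tup4 a b c e)))%:R.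

Definition pairIdx := {q : 'I_d * 'I_d | (q.1 <= q.2)%N}.
Definition blkIdx := {t : ('I_d * 'I_d) * 'I_d | (t.1.1 < t.1.2)%N}.
Definition M4idx := (pairIdx + blkIdx)%type.

Definition Mbar (p : {ffun 'I_d -> 'I_5} -> C) (r s : pairIdx) : C :=
  pbar p (val r).1 (val r).2 (val s).1 (val s).2.

Definition Mij (p : {ffun 'I_d -> 'I_5} -> C) (i j a b : 'I_d) : C :=
  pbar p i j a b.

Definition M4 (p : {ffun 'I_d -> 'I_5} -> C) (u v : M4idx) : C :=
  match u, v with
  | inl r, inl s => Mbar p r s
  | inr t, inr t' =>
      if (val t).1 == (val t').1 then Mij p (val t).1.1 (val t).1.2 (val t).2 (val t').2
      else 0
  | _, _ => 0
  end.

End Defs.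

(* Let a(x) and b(x) be the occupation vectors of a basis vector x on the
   parties outside and inside a cut S.  The partial transpose of rho_DS along S
   has entry pbar at a(x) + b(y) in position (x, y) if a(x) - b(x) = a(y) - b(y),
   and 0 otherwise.  Grouping basis vectors by the key a - b and by the middle
   vector g = min(a, b) makes it block diagonal: the block of a key of absolute
   value mu is (g, g') |-> pbar_(mu + g + g') on the g with |mu| + 2|g| = 4.
   For |mu| = 0 this block is Mbar; for mu = e_i + e_j it is a submatrix of Mbar
   (i = j) or the block M_ij (i < j); for |mu| = 4 it is a nonnegative scalar.
   Hence M^(4) >= 0 implies PPT.  Conversely, along the 2:2 cut {2, 3} the matrix
   M^(4) is the principal submatrix of the partial transpose at the basis
   vectors |a b a b> and |i c j c>, so PPT gives M^(4) >= 0; its entries are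
   nonnegative by construction. *)

From mathcomp Require Import all_boot all_order all_algebra.
From mathcomp Require Import zify.
Set Implicit Arguments. Unset Strict Implicit. Unset Printing Implicit Defensive.
Import Order.TTheory GRing.Theory Num.Theory.
Local Open Scope ring_scope.

Section QuadraticForm.
Variable C : numClosedFieldType.

Definition qform (I : finType) (A : I -> I -> C) (v : I -> C) : C :=
  \sum_i \sum_j (v i)^* * A i j * v j.

Definition form_ge0 (I : finType) (A : I -> I -> C) : Prop :=
  forall v, 0 <= qform A v.

Lemma form_ge0_eq (I : finType) (A B : I -> I -> C) :
  form_ge0 A -> A =2 B -> form_ge0 B.
Proof.
move=> hA eAB v; have := hA v; congr (_ <= _).
by apply: eq_bigr => i _; apply: eq_bigr => j _; rewrite eAB.
Qed.

Lemma qform_pullback (I J : finType) (f : I -> J) (F : J -> J -> C) (v : I -> C) :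
  qform (fun x y => F (f x) (f y)) v = qform F (fun a => \sum_(x | f x == a) v x).
Proof.
rewrite /qform (partition_big f xpredT) //=; apply: eq_bigr => a _.
under [RHS]eq_bigr => b _ do rewrite rmorph_sum /= !mulr_suml.
rewrite [RHS]exchange_big /=; apply: eq_bigr => x /eqP fx.
rewrite (partition_big f xpredT) //=; apply: eq_bigr => b _.
rewrite big_distrr /=; apply: eq_bigr => y /eqP fy.
by rewrite fx fy.
Qed.

Lemma form_ge0_pullback (I J : finType) (f : I -> J) (F : J -> J -> C) :
  form_ge0 F -> form_ge0 (fun x y => F (f x) (f y)).
Proof. by move=> hF v; rewrite qform_pullback. Qed.

Lemma qform_blockdiag (K G : finType) (B : K -> G -> G -> C) (w : K * G -> C) :
  qform (fun u u' : K * G => if u.1 == u'.1 then B u.1 u.2 u'.2 else 0) w =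
  \sum_k qform (B k) (fun g => w (k, g)).
Proof.
have sum_pair (E : K * G -> C) : \sum_u E u = \sum_k \sum_g E (k, g).
  by rewrite pair_bigA; apply: eq_bigr => -[].
rewrite /qform sum_pair; apply: eq_bigr => k _; apply: eq_bigr => g _.
rewrite sum_pair (bigD1 k) //= eqxx [X in _ + X]big1 ?addr0 // => k' k'k.
by apply: big1 => g' _; rewrite eq_sym (negbTE k'k) mulr0 mul0r.
Qed.

Lemma form_ge0_blockdiag (K G : finType) (B : K -> G -> G -> C) :
  (forall k, form_ge0 (B k)) ->
  form_ge0 (fun u u' : K * G => if u.1 == u'.1 then B u.1 u.2 u'.2 else 0).
Proof. by move=> hB w; rewrite qform_blockdiag; apply: sumr_ge0 => k _; apply: hB. Qed.

Lemma form_ge0_const (I : finType) (c : C) : 0 <= c -> form_ge0 (fun _ _ : I => c).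
Proof.
move=> c_ge0 v; rewrite /qform.
under eq_bigr => i _ do rewrite -mulr_sumr.
by rewrite -!mulr_suml -rmorph_sum mulrAC mulr_ge0 // mulrC mul_conjC_ge0.
Qed.

(* Each point of the image of [h] is given the weight of [v] at one chosen
   preimage, so the form of [B] at [v] is a form of [M] pulled back along [e]. *)
Lemma form_ge0_codom (I J K : finType) (h : J -> I) (e : J -> K)
    (B : I -> I -> C) (M : K -> K -> C) :
  form_ge0 M -> (forall j j', B (h j) (h j') = M (e j) (e j')) ->
  (forall x y, B x y != 0 -> (x \in codom h) && (y \in codom h)) -> form_ge0 B.
Proof.
move=> hM BhE suppB v.
have hB : form_ge0 (fun j j' => B (h j) (h j')).
  by apply: (form_ge0_eq (form_ge0_pullback e hM)) => j j'; rewrite BhE.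
pose z j := if [pick j' | h j' == h j] == Some j then v (h j) else 0.
have fiber_z x : \sum_(j | h j == x) z j = if x \in codom h then v x else 0.
  rewrite (eq_bigr (fun j => if [pick j' | h j' == x] == Some j then v x else 0));
    last by move=> j /eqP <-.
  case: (pickP (fun j => h j == x)) => [j0 /eqP hj0 | nox].
    rewrite -hj0 codom_f (bigD1 j0) ?hj0 //= eqxx big1 ?addr0 // => j /andP [_].
    by rewrite (inj_eq Some_inj) eq_sym => /negbTE ->.
  rewrite big1 //; case: codomP => // -[j xE].
  by have := nox j; rewrite xE eqxx.
have := hB z; rewrite qform_pullback; congr (_ <= _).
apply: eq_bigr => x _; apply: eq_bigr => y _; rewrite !fiber_z.
have [->|/suppB/andP [-> ->] //] := eqVneq (B x y) 0.
by rewrite !mulr0 !mul0r.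
Qed.

End QuadraticForm.

Lemma sum_delta (I : finType) (a : I) : (\sum_i (a == i : nat))%N = 1%N.
Proof.
by apply/eqP/sum_nat_eq1; exists a; split=> [||i]; rewrite ?eqxx // eq_sym => /negbTE ->.
Qed.

Lemma nat_vec_sum1 (I : finType) (nu : I -> nat) :
  (\sum_i nu i)%N = 1%N -> exists a, forall i, nu i = (a == i) :> nat.
Proof.
move/eqP/sum_nat_eq1 => [a [_ nua nu0]]; exists a => i.
by case: (eqVneq a i) => [<- // | ne]; rewrite nu0 // eq_sym.
Qed.

Lemma nat_vec_sum2 (I : finType) (nu : I -> nat) :
  (\sum_i nu i)%N = 2%N -> exists a b, forall i, nu i = ((a == i) + (b == i))%N.
Proof.
move=> sum2; have [b nub] : exists b, (0 < nu b)%N.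
  apply/existsP; apply: contraT; rewrite negb_exists => /forallP nu0.
  by move: sum2; rewrite big1 // => i _; move: (nu0 i); rewrite lt0n negbK => /eqP.
have le_nu i : ((b == i) <= nu i)%N by case: eqP => [<-|].
have [|a nuE] := @nat_vec_sum1 _ (fun i => nu i - (b == i))%N.
  have : (\sum_i (nu i - (b == i)) + \sum_i (b == i))%N = 2%N.
    by rewrite -big_split -sum2; apply: eq_bigr => i _; rewrite /= subnK.
  by rewrite sum_delta; lia.
by exists a, b => i; have := nuE i; have := le_nu i; lia.
Qed.

Section Occupation.
Variable d : nat.
Implicit Types (x y : basis4 d) (S : {set 'I_4}) (nu : 'I_d -> nat).

Definition cnt x i : nat := (\sum_j (x j == i))%N.
Definition cnt_in S x i : nat := (\sum_(j in S) (x j == i))%N.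
Definition cnt_out S x i : nat := (\sum_(j in ~: S) (x j == i))%N.

Definition kvec nu : {ffun 'I_d -> 'I_5} := [ffun i => inord (nu i)].

Lemma kvecK nu i : (nu i <= 4)%N -> kvec nu i = nu i :> nat.
Proof. by move=> nui4; rewrite ffunE inordK. Qed.

Lemma eq_kvec nu nu' : nu =1 nu' -> kvec nu = kvec nu'.
Proof. by move=> eq_nu; apply/ffunP => i; rewrite !ffunE eq_nu. Qed.

Lemma kvec_val (g : {ffun 'I_d -> 'I_5}) : kvec (fun i => g i) = g.
Proof. by apply/ffunP => i; apply/val_inj; rewrite /= kvecK // -ltnS. Qed.

Definition mix S x y : basis4 d := [ffun j => if j \in S then y j else x j].

Lemma cnt_split S x i : cnt x i = (cnt_out S x i + cnt_in S x i)%N.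
Proof.
rewrite /cnt (bigID (fun j => j \in S)) addnC /=.
by congr (_ + _)%N; apply: eq_bigl => j; rewrite ?inE.
Qed.

Lemma cnt_le4 x i : (cnt x i <= 4)%N.
Proof.
apply: (@leq_trans (\sum_(j < 4) 1)%N); last by rewrite sum1_card card_ord.
by apply: leq_sum => j _; apply: leq_b1.
Qed.

Lemma sum_cnt x : (\sum_i cnt x i)%N = 4%N.
Proof.
rewrite /cnt exchange_big /= (eq_bigr (fun=> 1%N)) ?sum1_card ?card_ord // => j _.
by rewrite (bigD1 (x j)) //= eqxx big1 // => i; rewrite eq_sym => /negbTE ->.
Qed.

Lemma occ_kvec x : occ x = kvec (cnt x).
Proof.
apply/ffunP => i; rewrite !ffunE; congr inord.
by rewrite -sum1dep_card big_mkcond; apply: eq_bigr => j _; case: eqP.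
Qed.

Lemma kvec_eqP nu nu' : (forall i, nu i <= 4)%N -> (forall i, nu' i <= 4)%N ->
  reflect (nu =1 nu') (kvec nu == kvec nu').
Proof.
move=> nu4 nu'4; apply: (iffP eqP) => [kE i|/eq_kvec //].
by rewrite -(kvecK (nu4 i)) -(kvecK (nu'4 i)) kE.
Qed.

Lemma valid_kvec nu : (\sum_i nu i)%N = 4%N -> valid_k (kvec nu).
Proof.
move=> sum4; apply/eqP; rewrite -[RHS]sum4; apply: eq_bigr => i _.
by rewrite kvecK // -sum4 (bigD1 i) //= leq_addr.
Qed.

Lemma valid_occ x : valid_k (occ x).
Proof. by rewrite occ_kvec; apply/valid_kvec/sum_cnt. Qed.

Lemma cnt_out_le4 S x i : (cnt_out S x i <= 4)%N.
Proof. by have := cnt_le4 x i; rewrite (cnt_split S); lia. Qed.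

Lemma cnt_in_le4 S x i : (cnt_in S x i <= 4)%N.
Proof. by have := cnt_le4 x i; rewrite (cnt_split S); lia. Qed.

Lemma cnt_mix S x y i : cnt (mix S x y) i = (cnt_out S x i + cnt_in S y i)%N.
Proof.
rewrite (cnt_split S); congr (_ + _)%N; apply: eq_bigr => j; rewrite ffunE ?inE.
  by move=> /negbTE ->.
by move=> ->.
Qed.

Lemma cnt_tup4 a b c e i :
  cnt (tup4 a b c e) i = ((a == i) + (b == i) + (c == i) + (e == i))%N.
Proof. by rewrite /cnt !big_ord_recl big_ord0 !ffunE /= addn0 !addnA. Qed.

Definition pt_key S x : {ffun 'I_d -> 'I_5} * {ffun 'I_d -> 'I_5} :=
  (kvec (fun i => cnt_out S x i - cnt_in S x i)%N,
   kvec (fun i => cnt_in S x i - cnt_out S x i)%N).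

Definition pt_mid S x : {ffun 'I_d -> 'I_5} :=
  kvec (fun i => minn (cnt_out S x i) (cnt_in S x i)).

Definition key_abs (k : {ffun 'I_d -> 'I_5} * {ffun 'I_d -> 'I_5}) i : nat :=
  (k.1 i + k.2 i)%N.

Definition ksum (g : {ffun 'I_d -> 'I_5}) : nat := (\sum_i g i)%N.

Lemma sum_key_mid S x : (\sum_i key_abs (pt_key S x) i + 2 * ksum (pt_mid S x))%N = 4%N.
Proof.
rewrite -(sum_cnt x) /ksum big_distrr -big_split; apply: eq_bigr => i _ /=.
have := cnt_out_le4 S x i; have := cnt_in_le4 S x i.
by rewrite /key_abs (cnt_split S) => ? ?; rewrite !kvecK; lia.
Qed.

Lemma eq_pt_key S x y : (pt_key S x == pt_key S y) =
  [forall i, cnt_out S x i + cnt_in S y i == cnt_out S y i + cnt_in S x i]%N.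
Proof.
have b1 z i : (cnt_out S z i - cnt_in S z i <= 4)%N.
  by have := cnt_out_le4 S z i; lia.
have b2 z i : (cnt_in S z i - cnt_out S z i <= 4)%N.
  by have := cnt_in_le4 S z i; lia.
rewrite xpair_eqE; apply/andP/forallP => [[E1 E2] i|E].
  move/(kvec_eqP (b1 x) (b1 y))/(_ i): E1; move/(kvec_eqP (b2 x) (b2 y))/(_ i): E2.
  lia.
by split; apply/kvec_eqP => // i; have /eqP := E i; lia.
Qed.

Lemma cnt_mix_key S x y i : pt_key S x = pt_key S y ->
  (cnt_out S x i + cnt_in S y i = key_abs (pt_key S x) i + pt_mid S x i + pt_mid S y i)%N.
Proof.
move=> /eqP; rewrite eq_pt_key => /forallP/(_ i)/eqP.
have := cnt_out_le4 S x i; have := cnt_in_le4 S x i.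
have := cnt_out_le4 S y i; have := cnt_in_le4 S y i.
by rewrite /key_abs => ? ? ? ? ?; rewrite !kvecK; lia.
Qed.

Definition sort_pair (a b : 'I_d) : pairIdx d :=
  match leqP a b with
  | LeqNotGtn ab => exist _ (a, b) ab
  | GtnNotLeq ba => exist _ (b, a) (ltnW ba)
  end.

Lemma sort_pair_cnt a b i :
  (((val (sort_pair a b)).1 == i) + ((val (sort_pair a b)).2 == i))%N =
  ((a == i) + (b == i))%N.
Proof. by rewrite /sort_pair; case: leqP => //= _; rewrite addnC. Qed.

Lemma ksum_kvec nu : (\sum_i nu i <= 4)%N -> ksum (kvec nu) = (\sum_i nu i)%N.
Proof.
move=> sum_le4; apply: eq_bigr => i _; rewrite kvecK //.
by apply: leq_trans sum_le4; rewrite (bigD1 i) //= leq_addr.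
Qed.

Definition unit_vec (b : 'I_d) : {ffun 'I_d -> 'I_5} := kvec (fun i => (b == i : nat)).

Definition pair_vec (r : pairIdx d) : {ffun 'I_d -> 'I_5} :=
  kvec (fun i => ((val r).1 == i) + ((val r).2 == i))%N.

Lemma unit_vecE b i : unit_vec b i = (b == i) :> nat.
Proof. by rewrite kvecK //; case: eqP. Qed.

Lemma pair_vecE r i : (pair_vec r i = ((val r).1 == i) + ((val r).2 == i) :> nat)%N.
Proof. by rewrite kvecK //; case: (_ == i); case: (_ == i). Qed.

Lemma ksum_unit_vec b : ksum (unit_vec b) = 1%N.
Proof. by rewrite ksum_kvec sum_delta. Qed.

Lemma ksum_pair_vec r : ksum (pair_vec r) = 2%N.
Proof. by rewrite ksum_kvec big_split /= !sum_delta. Qed.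

Lemma ksum0 g : ksum g = 0%N -> g = kvec (fun=> 0%N).
Proof.
move/eqP; rewrite sum_nat_eq0 => /forallP g0.
by rewrite -[g in LHS]kvec_val; apply: eq_kvec => i; apply/eqP/(implyP (g0 i)).
Qed.

Lemma ksum1_codom g : ksum g = 1%N -> g \in codom unit_vec.
Proof.
move/nat_vec_sum1 => [b gE]; apply/codomP; exists b.
by rewrite -[g in LHS]kvec_val; apply: eq_kvec.
Qed.

Lemma ksum2_codom g : ksum g = 2%N -> g \in codom pair_vec.
Proof.
move/nat_vec_sum2 => [a [b gE]]; apply/codomP; exists (sort_pair a b).
by rewrite -[g in LHS]kvec_val; apply: eq_kvec => i; rewrite sort_pair_cnt.
Qed.

Definition S23 : {set 'I_4} := [set j : 'I_4 | 2 <= j]%N.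

Lemma card_S23 : #|S23| = 2%N.
Proof. by rewrite -sum1dep_card big_mkcond /= !big_ord_recl big_ord0. Qed.

Lemma cnt_out_tup4 a b c e i : cnt_out S23 (tup4 a b c e) i = ((a == i) + (b == i))%N.
Proof. by rewrite /cnt_out big_mkcond /= !big_ord_recl big_ord0 !inE !ffunE /= !addn0. Qed.

Lemma cnt_in_tup4 a b c e i : cnt_in S23 (tup4 a b c e) i = ((c == i) + (e == i))%N.
Proof. by rewrite /cnt_in big_mkcond /= !big_ord_recl big_ord0 !inE !ffunE /= !addn0. Qed.

Definition M4_basis (u : M4idx d) : basis4 d :=
  match u with
  | inl r => tup4 (val r).1 (val r).2 (val r).1 (val r).2
  | inr t => tup4 (val t).1.1 (val t).2 (val t).1.2 (val t).2
  end.

End Occupation.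

Section DiagonalSymmetricState.
Variables (C : numClosedFieldType) (d : nat) (p : {ffun 'I_d -> 'I_5} -> C).
Hypothesis p_ge0 : forall k, valid_k k -> 0 <= p k.
Implicit Types (x y : basis4 d) (S : {set 'I_4}) (nu mu : 'I_d -> nat).

Definition pbar_of nu : C := p (kvec nu) / (multinom (kvec nu))%:R.

Lemma eq_pbar_of nu nu' : nu =1 nu' -> pbar_of nu = pbar_of nu'.
Proof. by move=> /eq_kvec eq_k; rewrite /pbar_of eq_k. Qed.

Lemma pbar_of_ge0 nu : (\sum_i nu i)%N = 4%N -> 0 <= pbar_of nu.
Proof. by move=> /valid_kvec/p_ge0 pk_ge0; rewrite divr_ge0 ?ler0n. Qed.

Lemma rhoDS_herm x y : rhoDS p y x = (rhoDS p x y)^*.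
Proof.
rewrite /rhoDS rmorph_sum; apply: eq_bigr => k /p_ge0 pk_ge0.
by rewrite !rmorphM /= conjCK (geC0_conj pk_ge0) mulrAC.
Qed.

Lemma rhoDS_entry x y : rhoDS p x y = if occ x == occ y then pbar_of (cnt x) else 0.
Proof.
rewrite /rhoDS (bigD1 (occ x)) ?valid_occ //= big1 ?addr0 => [|k /andP [_ kx]].
  rewrite /dicke eqxx eq_sym; case: eqP => _; last by rewrite conjC0 mulr0.
  rewrite geC0_conj ?invr_ge0 ?sqrtC_ge0 ?ler0n //.
  by rewrite -mulrA -invfM -expr2 sqrtCK occ_kvec.
by rewrite /dicke eq_sym (negbTE kx) mulr0 mul0r.
Qed.

Lemma ptrans_entry S x y : ptrans S (rhoDS p) x y =
  if [forall i, cnt_out S x i + cnt_in S y i == cnt_out S y i + cnt_in S x i]%N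
  then pbar_of (fun i => cnt_out S x i + cnt_in S y i)%N else 0.
Proof.
rewrite /ptrans -/(mix S x y) -/(mix S y x) rhoDS_entry !occ_kvec.
case: (kvec_eqP (cnt_le4 _) (cnt_le4 _)) => [E|NE].
  rewrite (_ : [forall i, _] = true); first by apply: eq_pbar_of => i; rewrite cnt_mix.
  by apply/forallP => i; rewrite -!cnt_mix E.
case: forallP => // E; case: NE => i; rewrite !cnt_mix; exact/eqP.
Qed.

Lemma pbarE a b c e : pbar p a b c e =
  pbar_of (fun i => (a == i) + (b == i) + (c == i) + (e == i))%N.
Proof. by rewrite /pbar occ_kvec; apply: eq_pbar_of => i; rewrite cnt_tup4. Qed.

Definition pt_block mu (g g' : {ffun 'I_d -> 'I_5}) : C :=
  if (\sum_i mu i + 2 * ksum g == 4)%N && (\sum_i mu i + 2 * ksum g' == 4)%N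
  then pbar_of (fun i => mu i + g i + g' i)%N else 0.

Lemma ptrans_blockdiag S x y : ptrans S (rhoDS p) x y =
  if pt_key S x == pt_key S y
  then pt_block (key_abs (pt_key S x)) (pt_mid S x) (pt_mid S y) else 0.
Proof.
rewrite ptrans_entry -eq_pt_key; case: eqP => // kE.
rewrite /pt_block sum_key_mid {1}kE sum_key_mid eqxx.
by apply: eq_pbar_of => i; rewrite (cnt_mix_key _ kE).
Qed.

Lemma pt_block_supp mu g g' : pt_block mu g g' != 0 ->
  (\sum_i mu i + 2 * ksum g == 4)%N && (\sum_i mu i + 2 * ksum g' == 4)%N.
Proof. by rewrite /pt_block; case: ifP => // _; rewrite eqxx. Qed.

Lemma M4_embeds_pair_block c1 c2 : exists e : 'I_d -> M4idx d, forall b b',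
  M4 p (e b) (e b') = pbar_of (fun i => (c1 == i) + (c2 == i) + (b == i) + (b' == i))%N.
Proof.
wlog c12 : c1 c2 / (c1 <= c2)%N => [wlog_c12|].
  have [/wlog_c12 //|/ltnW/wlog_c12 [e eE]] := leqP c1 c2.
  by exists e => b b'; rewrite eE; apply: eq_pbar_of => i; lia.
have [<-|ne12] := eqVneq c1 c2.
  exists (fun b => inl (sort_pair c1 b)) => b b'; rewrite /= /Mbar pbarE.
  apply: eq_pbar_of => i; have := sort_pair_cnt c1 b i; have := sort_pair_cnt c1 b' i.
  lia.
have lt12 : (c1 < c2)%N by rewrite ltn_neqAle ne12.
exists (fun b => inr (exist _ ((c1, c2), b) lt12 : blkIdx d)) => b b'.
by rewrite /= eqxx /Mij pbarE; apply: eq_pbar_of => i; lia.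
Qed.

Lemma pt_block_ge0_sum0 mu : (\sum_i mu i)%N = 0%N -> form_ge0 (M4 p) -> form_ge0 (pt_block mu).
Proof.
move=> mu0 hM; have mu_i0 i : mu i = 0%N.
  by apply/eqP; rewrite -leqn0 -mu0 (bigD1 i) //= leq_addr.
apply: (form_ge0_codom (h := @pair_vec d) (e := @inl _ (blkIdx d)) hM).
  move=> r s; rewrite /pt_block mu0 !ksum_pair_vec /= /Mbar pbarE.
  by apply: eq_pbar_of => i; rewrite mu_i0 !pair_vecE add0n addnA.
move=> g g' /pt_block_supp; rewrite mu0 => /andP [/eqP g2 /eqP g2'].
by apply/andP; split; apply: ksum2_codom; lia.
Qed.

Lemma pt_block_ge0_sum2 mu c1 c2 : (forall i, mu i = (c1 == i) + (c2 == i))%N ->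
  form_ge0 (M4 p) -> form_ge0 (pt_block mu).
Proof.
move=> muE hM; have [e eE] := M4_embeds_pair_block c1 c2.
have mu2 : (\sum_i mu i)%N = 2%N.
  by rewrite (eq_bigr _ (fun i _ => muE i)) big_split /= !sum_delta.
apply: (form_ge0_codom (h := @unit_vec d) (e := e) hM).
  move=> b b'; rewrite /pt_block mu2 !ksum_unit_vec /= eE.
  by apply: eq_pbar_of => i; rewrite muE !unit_vecE.
move=> g g' /pt_block_supp; rewrite mu2 => /andP [/eqP g1 /eqP g1'].
by apply/andP; split; apply: ksum1_codom; lia.
Qed.

Lemma pt_block_ge0_sum4 mu : (\sum_i mu i)%N = 4%N -> form_ge0 (pt_block mu).
Proof.
move=> mu4; pose h (_ : unit) : {ffun 'I_d -> 'I_5} := kvec (fun=> 0%N).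
have ksum_h : ksum (h tt) = 0%N by rewrite ksum_kvec ?big1.
apply: (form_ge0_codom (h := h) (e := id) (form_ge0_const (I := unit) (pbar_of_ge0 mu4))).
  move=> [] []; rewrite /pt_block ksum_h mu4 /=.
  by apply: eq_pbar_of => i; rewrite kvecK // !addn0.
move=> g g' /pt_block_supp; rewrite mu4 => /andP [/eqP g0 /eqP g0'].
have /ksum0 -> : ksum g = 0%N by lia.
have /ksum0 -> : ksum g' = 0%N by lia.
by rewrite (codom_f h tt).
Qed.

Lemma pt_block_ge0 mu : form_ge0 (M4 p) -> form_ge0 (pt_block mu).
Proof.
move=> hM; set m := (\sum_i mu i)%N.
have [m0|[m2|[m4|m_odd]]] : m = 0%N \/ m = 2%N \/ m = 4%N \/ forall s, (m + 2 * s != 4)%N.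
- by case: m => [|[|[|[|[|m]]]]]; auto; right; right; right => s; lia.
- exact: pt_block_ge0_sum0.
- by have [c1 [c2 muE]] := nat_vec_sum2 m2; apply: pt_block_ge0_sum2 muE hM.
- exact: pt_block_ge0_sum4.
apply: (form_ge0_eq (form_ge0_const (I := {ffun 'I_d -> 'I_5}) (lexx (0 : C)))) => g g'.
by rewrite /pt_block -/m (negbTE (m_odd _)).
Qed.

Lemma ord_ltn_eqF n (i j : 'I_n) : (i < j)%N -> (i == j) = false.
Proof. by move=> ij; apply/eqP => ji; move: ij; rewrite ji ltnn. Qed.

Lemma ord_gtn_eqF n (i j : 'I_n) : (i < j)%N -> (j == i) = false.
Proof. by move=> ij; apply/eqP => ji; move: ij; rewrite ji ltnn. Qed.

Lemma ptrans_psi u v : ptrans S23 (rhoDS p) (M4_basis u) (M4_basis v) = M4 p u v.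
Proof.
rewrite ptrans_entry.
case: u v => [[[a b] ab]|[[[i j] c] ij]] [[[a' b'] ab']|[[[i' j'] c'] ij']] /=.
- rewrite ifT; last by apply/forallP => k; rewrite !cnt_out_tup4 !cnt_in_tup4 addnC.
  by rewrite /Mbar pbarE; apply: eq_pbar_of => k; rewrite cnt_out_tup4 cnt_in_tup4 addnA.
- rewrite ifF //; apply/negP => /forallP/(_ i')/eqP.
  by rewrite !cnt_out_tup4 !cnt_in_tup4 eqxx (ord_gtn_eqF ij'); lia.
- rewrite ifF //; apply/negP => /forallP/(_ i)/eqP.
  by rewrite !cnt_out_tup4 !cnt_in_tup4 eqxx (ord_gtn_eqF ij); lia.
case: eqP => [[<- <-] | ne].
  rewrite ifT; last by apply/forallP => k; rewrite !cnt_out_tup4 !cnt_in_tup4; apply/eqP; lia.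
  by rewrite /Mij pbarE; apply: eq_pbar_of => k; rewrite cnt_out_tup4 cnt_in_tup4 /=; lia.
rewrite ifF //; apply/negP => /forallP E; apply: ne.
have := eqP (E i); have := eqP (E j); rewrite !cnt_out_tup4 !cnt_in_tup4 !eqxx.
have [ij_ne ji_ne] := (ord_ltn_eqF ij, ord_gtn_eqF ij); rewrite ij_ne ji_ne.
have [-> | ni] := eqVneq i' i; last by lia.
by rewrite ij_ne; have [-> | nj] := eqVneq j' j; last lia.
Qed.

Lemma M4_ge0 u v : 0 <= M4 p u v.
Proof.
have pbar_ge0 a b c e : 0 <= pbar p a b c e.
  by rewrite pbarE pbar_of_ge0 // !big_split /= !sum_delta.
case: u v => [r|t] [s|t'] //=; first exact: pbar_ge0.
by case: ifP.
Qed.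

Lemma dnn_M4 : psd (ptrans S23 (rhoDS p)) -> dnn (M4 p).
Proof.
move=> [pt_herm pt_ge0]; split; last exact: M4_ge0.
split=> [u v|]; first by rewrite -!ptrans_psi pt_herm.
by apply: (form_ge0_eq (form_ge0_pullback (@M4_basis d) pt_ge0)) => u v; rewrite ptrans_psi.
Qed.

Lemma psd_ptrans S : form_ge0 (M4 p) -> psd (ptrans S (rhoDS p)).
Proof.
move=> hM; split=> [x y|]; first exact: rhoDS_herm.
pose B u u' := if u.1 == u'.1 then pt_block (key_abs u.1) u.2 u'.2 else 0.
have B_ge0 : form_ge0 B := form_ge0_blockdiag (fun k => pt_block_ge0 (key_abs k) hM).
apply: (form_ge0_eq (form_ge0_pullback (fun x => (pt_key S x, pt_mid S x)) B_ge0)).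
by move=> x y; rewrite ptrans_blockdiag.
Qed.

End DiagonalSymmetricState.

Theorem theorem8 (C : numClosedFieldType) (d : nat)
  (p : {ffun 'I_d -> 'I_5} -> C) :
  (2 <= d)%N -> diag_sym_weights p ->
  (PPT (rhoDS p) <-> dnn (M4 p)).
Proof.
move=> _ [p_ge0 _]; split=> [ppt | [[_ M4_form_ge0] _] S _].
  by apply: dnn_M4 => //; apply: ppt; rewrite card_S23.
exact: psd_ptrans.
Qed.
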